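(* Let $n\ge3$. There exists no spherical $(2,2)$-design $C\subset\mathbb{S}^{n-1}$ with $|C|=\binom{n+1}{2}+1$.
   Context: For $n\ge 2$, let $P_i^{(n)}(t)$ be the normalized Gegenbauer polynomials: $P_0^{(n)}=1$, $P_1^{(n)}=t$, and $(i+n-2)P_{i+1}^{(n)}(t)=(2i+n-2)tP_i^{(n)}(t)-iP_{i-1}^{(n)}(t)$ for $i\ge1$. A spherical $(2,2)$-design is a finite nonempty $C\subset\mathbb{S}^{n-1}$ with $\sum_{x,y\in C}P_{2}^{(n)}(\langle x,y\rangle)=\sum_{x,y\in C}P_{4}^{(n)}(\langle x,y\rangle)=0$. *)

From HB Require Import structures.
From mathcomp Require Import all_boot all_order all_algebra.
From mathcomp Require Import reals.
Set Implicit Arguments. Unset Strict Implicit. Unset Printing Implicit Defensive.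
Import Order.TTheory GRing.Theory Num.Theory.
Local Open Scope ring_scope.

Section Defs.
Variable R : realType.

(* gegen_pair n i t = (P_i^{(n)}(t), P_{i+1}^{(n)}(t)) *)
Fixpoint gegen_pair (n i : nat) (t : R) : R * R :=
  match i with
  | 0%N => (1, t)
  | j.+1 =>
      let: (a, b) := gegen_pair n j t in
      (* a = P_j, b = P_{j+1} = P_i with i = j+1; compute P_{i+1} via
         (i+n-2) P_{i+1} = (2i+n-2) t P_i - i P_{i-1} *)
      (b, ((2 * (j.+1)%:R + n%:R - 2) * t * b - (j.+1)%:R * a)
            / ((j.+1)%:R + n%:R - 2))
  end.

Definition gegen (n i : nat) (t : R) : R := (gegen_pair n i t).1.

Definition inner (n : nat) (x y : 'rV[R]_n) : R := \sum_(k < n) x 0 k * y 0 k.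

(* a finite subset of S^{n-1} is represented by a duplicate-free sequence *)
Definition spherical22design (n : nat) (C : seq 'rV[R]_n) : Prop :=
  [/\ C != [::], uniq C,
      (forall x, x \in C -> inner x x = 1),
      \sum_(x <- C) \sum_(y <- C) gegen n 2 (inner x y) = 0
    & \sum_(x <- C) \sum_(y <- C) gegen n 4 (inner x y) = 0].
End Defs.

(* For a (2,2)-design of [s] unit vectors [x_i] in [R^n], the Gegenbauer
   conditions make [\sum <x_i,x_j>^2] and [\sum <x_i,x_j>^4] equal to their least
   possible values [s^2 / n] and [3 s^2 / (n (n + 2))].  By the equality case of
   Cauchy-Schwarz, [\sum_i x_i x_i^T = (s / n) I] and the fourth tensor powers
   sum to [s / (n (n + 2))] times the sum of the three pairings of deltas.
   As [s = C(n+1,2) + 1] exceeds the dimension of the symmetric matrices, some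
   weight [w <> 0] has [\sum_i w_i x_i x_i^T = 0].  In [R^s], the vector [e_k]
   minus its projection onto the span of [1], [w] and [(<x_k,x_j>^2)_j] has
   squared norm equal to its [k]-th entry, and for this [s] these entries sum to
   [0]; this determines every [<x_k,x_j>^2] and forces [w = +- rho] with both
   signs taken.  For [w_k = rho = - w_l], computing
   [\sum_i (rho + w_i) <x_k,x_i> <x_i,x_l>] in two ways gives an integer [z] with
   [16 n z^2 = (n-1)^2 (n-2) (n+2)], which is impossible for [n >= 3]. *)

From mathcomp Require Import all_boot all_order all_algebra.
From mathcomp Require Import reals.
From mathcomp.algebra_tactics Require Import ring lra.
From mathcomp Require Import zify.
Set Implicit Arguments. Unset Strict Implicit. Unset Printing Implicit Defensive.
Import Order.TTheory GRing.Theory Num.Theory.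
Local Open Scope ring_scope.
Local Notation δ a b := ((a == b)%:R).

Section SumsOfSquares.
Variable R : realDomainType.

Lemma sum_sqr_eq0 (I : finType) (F : I -> R) :
  \sum_i F i ^+ 2 = 0 -> forall i, F i = 0.
Proof.
move=> /eqP; rewrite psumr_eq0 => [/allP F0 i|i _]; last exact: sqr_ge0.
by apply/eqP; rewrite -sqrf_eq0; apply: F0; rewrite mem_index_enum.
Qed.

Lemma sum2_sqr_eq0 (I : finType) (F : I -> I -> R) :
  \sum_p \sum_q F p q ^+ 2 = 0 -> forall p q, F p q = 0.
Proof.
by rewrite pair_bigA => /= /sum_sqr_eq0 F0 p q; apply: (F0 (p, q)).
Qed.

(* The hypotheses say that [\sum (F - k G)^2 = 0]. *)
Lemma sum2_sqr_scale (I : finType) (F G : I -> I -> R) (k : R) :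
  \sum_p \sum_q F p q ^+ 2 = k ^+ 2 * \sum_p \sum_q G p q ^+ 2 ->
  \sum_p \sum_q F p q * G p q = k * \sum_p \sum_q G p q ^+ 2 ->
  forall p q, F p q = k * G p q.
Proof.
move=> F2 FG p q; apply/eqP; rewrite -subr_eq0; apply/eqP; move: p q.
apply: sum2_sqr_eq0.
have -> : \sum_p \sum_q (F p q - k * G p q) ^+ 2 =
    \sum_p \sum_q F p q ^+ 2 - 2 * k * \sum_p \sum_q F p q * G p q
    + k ^+ 2 * \sum_p \sum_q G p q ^+ 2.
  rewrite !mulr_sumr -sumrB -big_split; apply: eq_bigr => p _ /=.
  by rewrite !mulr_sumr -sumrB -big_split; apply: eq_bigr => q _ /=; ring.
by rewrite F2 FG; ring.
Qed.

End SumsOfSquares.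

Section Contractions.
Variable R : comPzRingType.

Lemma sum_mul_delta (I : finType) (F : I -> R) c : \sum_j F j * δ c j = F c.
Proof.
rewrite (bigD1 c) //= eqxx mulr1 big1 ?addr0 // => j /negPf.
by rewrite eq_sym => ->; rewrite mulr0.
Qed.

Lemma sum_pair (I J : finType) (F : I * J -> R) :
  \sum_p F p = \sum_i \sum_j F (i, j).
Proof. by rewrite pair_bigA; apply: eq_bigr => -[]. Qed.

Variables (s : nat) (I : finType) (u : 'I_s -> I -> R).

Lemma sum_gram_sqr :
  \sum_a \sum_b (\sum_i u i a * u i b) ^+ 2 =
  \sum_i \sum_j (\sum_a u i a * u j a) ^+ 2.
Proof.
under eq_bigr => a _ do under eq_bigr => b _ do rewrite expr2 big_distrlr.
under eq_bigr => a _ do rewrite exchange_big.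
rewrite exchange_big; apply: eq_bigr => i _ /=.
under eq_bigr => a _ do rewrite exchange_big.
rewrite exchange_big; apply: eq_bigr => j _ /=.
rewrite expr2 big_distrlr; apply: eq_bigr => a _; apply: eq_bigr => b _ /=; ring.
Qed.

Lemma sum_weighted_proj (c : 'I_s -> R) (f g : I -> R) :
  \sum_j c j * ((\sum_a f a * u j a) * (\sum_b g b * u j b)) =
  \sum_a \sum_b f a * g b * (\sum_j c j * (u j a * u j b)).
Proof.
transitivity (\sum_j \sum_a \sum_b c j * (f a * u j a) * (g b * u j b)).
  apply: eq_bigr => j _; rewrite big_distrlr mulr_sumr; apply: eq_bigr => a _.
  by rewrite mulr_sumr; apply: eq_bigr => b _; rewrite /= mulrA.
rewrite exchange_big; apply: eq_bigr => a _ /=; rewrite exchange_big.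
by apply: eq_bigr => b _; rewrite mulr_sumr; apply: eq_bigr => j _ /=; ring.
Qed.

End Contractions.

Lemma sum_sqr_pm (R : idomainType) (I : finType) (P : pred I) (a : I -> R) alpha :
  (forall i, P i -> a i = 0 \/ a i ^+ 2 = alpha) ->
  exists z : int, (\sum_(i | P i) a i) ^+ 2 = z%:~R ^+ 2 * alpha.
Proof.
move=> a_pm; case: (pickP [pred i | P i && (a i != 0)]) => [i0 /andP[Pi0 ai0] | a0].
  have a2 : a i0 ^+ 2 = alpha by case: (a_pm i0 Pi0) => // ai0_eq0; rewrite ai0_eq0 eqxx in ai0.
  have [z ->] : exists z : int, \sum_(i | P i) a i = z%:~R * a i0.
    apply: (big_ind (fun x => exists z : int, x = z%:~R * a i0)).
    - by exists 0; rewrite mul0r.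
    - by move=> _ _ [x ->] [y ->]; exists (x + y); rewrite intrD mulrDl.
    move=> i Pi; case: (a_pm i Pi) => [->|]; first by exists 0; rewrite mul0r.
    rewrite -a2 => /eqP; rewrite eqf_sqr => /orP[/eqP->|/eqP->].
      by exists 1; rewrite mul1r.
    by exists (-1); rewrite mulN1r.
  by exists z; rewrite exprMn a2.
exists 0; rewrite expr0n mul0r big1 ?expr0n // => i Pi.
by apply/eqP; move: (a0 i); rewrite /= Pi => /negbFE.
Qed.

(* Modulo [N = n], the equation reads [0 = 4]; so [N = 4] and [64 z^2 = 108]. *)
Lemma no_int_solution (n : nat) (z : int) : (3 <= n)%N ->
  16 * n%:Z * z ^+ 2 != (n%:Z - 1) ^+ 2 * (n%:Z - 2) * (n%:Z + 2).
Proof.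
move=> n_ge3; apply/negP => /eqP E.
have : 3 <= n%:Z by lia.
move: E; move: (n%:Z) (z ^+ 2) => N y E N_ge3.
have N_dvd4 : N * (N ^+ 3 - 2 * N ^+ 2 - 3 * N + 8 - 16 * y) = 4.
  have -> : N * (N ^+ 3 - 2 * N ^+ 2 - 3 * N + 8 - 16 * y) =
    (N - 1) ^+ 2 * (N - 2) * (N + 2) - 16 * N * y + 4 by ring.
  by rewrite -E subrr add0r.
move: N_dvd4; move: (_ - 16 * y) => K NK4.
have K1 : K = 1 by nia.
have N4 : N = 4 by rewrite K1 mulr1 in NK4.
by move: E; rewrite N4; lia.
Qed.

Section Pairings.
Variables (R : comPzRingType) (n : nat).

(* Divided by [n (n + 2)], this is the moment tensor [\int x_a x_b x_c x_d] of
   the unit sphere. *)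
Definition delta_pairings (p q : 'I_n * 'I_n) : R :=
  δ p.1 p.2 * δ q.1 q.2 + δ p.1 q.1 * δ p.2 q.2 + δ p.1 q.2 * δ p.2 q.1.

Lemma sum_delta_pairings (X : 'I_n * 'I_n -> 'I_n * 'I_n -> R) :
  \sum_p \sum_q X p q * delta_pairings p q =
  \sum_a \sum_c X (a, a) (c, c) + \sum_a \sum_b X (a, b) (a, b)
  + \sum_a \sum_b X (a, b) (b, a).
Proof.
transitivity (\sum_p \sum_q X p q * (δ p.1 p.2 * δ q.1 q.2)
  + \sum_p \sum_q X p q * (δ p.1 q.1 * δ p.2 q.2)
  + \sum_p \sum_q X p q * (δ p.1 q.2 * δ p.2 q.1)).
  rewrite -!big_split; apply: eq_bigr => p _; rewrite -!big_split.
  by apply: eq_bigr => q _; rewrite /= -!mulrDr.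
rewrite !sum_pair; congr (_ + _ + _); apply: eq_bigr => a _.
- transitivity (\sum_b (\sum_q X (a, b) q * δ q.1 q.2) * δ a b).
    apply: eq_bigr => b _; rewrite big_distrl; apply: eq_bigr => q _.
    by rewrite /= mulrA mulrAC.
  by rewrite sum_mul_delta sum_pair; apply: eq_bigr => c _; rewrite sum_mul_delta.
- under eq_bigr => b _ do rewrite sum_pair.
  under eq_bigr => b _ do under eq_bigr => c _ do
    (under eq_bigr => d _ do rewrite /= mulrA; rewrite sum_mul_delta).
  by apply: eq_bigr => b _; rewrite sum_mul_delta.
- under eq_bigr => b _ do rewrite sum_pair.
  under eq_bigr => b _ do under eq_bigr => c _ do
    (under eq_bigr => d _ do rewrite /= mulrCA mulrC; rewrite sum_mul_delta).
  by apply: eq_bigr => b _; rewrite sum_mul_delta.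
Qed.

Lemma sum_delta_pairings_sqr :
  \sum_p \sum_q delta_pairings p q ^+ 2 = 3 * n%:R * (n%:R + 2).
Proof.
under eq_bigr => p _ do under eq_bigr => q _ do rewrite expr2.
rewrite sum_delta_pairings -!big_split /=.
under eq_bigr => a _ do rewrite -!big_split /=.
transitivity (\sum_(a < n) \sum_(b < n) 3 * (1 + 2 * δ a b) : R).
  apply: eq_bigr => a _; apply: eq_bigr => b _.
  by rewrite /delta_pairings /= !eqxx (eq_sym b a); case: (a == b) => /=; ring.
under eq_bigr => a _ do rewrite -mulr_sumr big_split /= -mulr_sumr
  (eq_bigr _ (fun b _ => esym (mul1r (δ a b)))) sum_mul_delta sumr_const card_ord.
by rewrite -mulr_sumr sumr_const card_ord -mulr_natr; ring.
Qed.

Lemma sum_delta_pairings_tensor (f g : 'I_n -> R) :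
  \sum_p \sum_q f p.1 * f p.2 * (g q.1 * g q.2) * delta_pairings p q =
  (\sum_a f a * f a) * (\sum_a g a * g a) + 2 * (\sum_a f a * g a) ^+ 2.
Proof.
rewrite sum_delta_pairings mulr_natl mulr2n !expr2 !big_distrlr -addrA.
congr (_ + (_ + _)); apply: eq_bigr => a _; apply: eq_bigr => b _ /=; ring.
Qed.
End Pairings.
Arguments delta_pairings {R n}.

Section TightFrame.
Variables (R : realFieldType) (n s : nat) (v : 'I_s -> 'I_n -> R).

Definition gram i j := \sum_a v i a * v j a.

Definition tensor_sq i (p : 'I_n * 'I_n) := v i p.1 * v i p.2.

Lemma gramC i j : gram i j = gram j i.
Proof. by apply: eq_bigr => a _; rewrite mulrC. Qed.

Lemma sum_tensor_sq i j : \sum_p tensor_sq i p * tensor_sq j p = gram i j ^+ 2.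
Proof.
rewrite sum_pair expr2 big_distrlr; apply: eq_bigr => a _; apply: eq_bigr => b _.
by rewrite /tensor_sq /=; ring.
Qed.

Lemma gram_weighted (c : 'I_s -> R) (lambda : R) :
  (forall a b, \sum_i c i * (v i a * v i b) = lambda * δ a b) ->
  forall k l, \sum_j c j * (gram k j * gram j l) = lambda * gram k l.
Proof.
move=> cE k l; under eq_bigr => j _ do rewrite [gram j l]gramC.
rewrite sum_weighted_proj mulr_sumr; apply: eq_bigr => a _.
under eq_bigr => b _ do rewrite cE mulrCA mulrA.
by rewrite sum_mul_delta mulrCA.
Qed.

Hypothesis n_gt0 : (0 < n)%N.
Hypothesis gram_diag : forall i, gram i i = 1.
Hypothesis frame_pot2 : \sum_i \sum_j gram i j ^+ 2 = s%:R ^+ 2 / n%:R.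
Hypothesis frame_pot4 :
  \sum_i \sum_j gram i j ^+ 4 = 3 * s%:R ^+ 2 / (n%:R * (n%:R + 2)).

Let n_neq0 : n%:R != 0 :> R. Proof. by rewrite pnatr_eq0 -lt0n. Qed.
Let n2_neq0 : n%:R + 2 != 0 :> R. Proof. by rewrite -(natrD _ n 2) pnatr_eq0 addn2. Qed.

Lemma frame_tight a b : \sum_i v i a * v i b = s%:R / n%:R * δ a b.
Proof.
have δ_sqr : \sum_(c < n) \sum_(d < n) δ c d ^+ 2 = n%:R :> R.
  under eq_bigr => c _ do rewrite (eq_bigr _ (fun b _ => expr2 _)) sum_mul_delta eqxx.
  by rewrite sumr_const card_ord.
move: a b; apply: (sum2_sqr_scale (F := fun a b => \sum_i v i a * v i b)).
  by rewrite sum_gram_sqr frame_pot2 δ_sqr; field.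
under eq_bigr => a _ do rewrite sum_mul_delta.
rewrite exchange_big δ_sqr (eq_bigr (fun _ => 1)) => [|i _]; last first.
  by rewrite -(gram_diag i).
by rewrite sumr_const card_ord -mulr_natr mul1r; field.
Qed.

Lemma frame4_tight p q :
  \sum_i tensor_sq i p * tensor_sq i q =
  s%:R / (n%:R * (n%:R + 2)) * delta_pairings p q.
Proof.
move: p q; apply: (sum2_sqr_scale
  (F := fun p q => \sum_i tensor_sq i p * tensor_sq i q)).
  rewrite sum_gram_sqr.
  under eq_bigr => i _ do under eq_bigr => j _ do rewrite sum_tensor_sq -exprM.
  by rewrite frame_pot4 sum_delta_pairings_sqr; field; rewrite n_neq0 n2_neq0.
transitivity (\sum_i \sum_p \sum_q
    tensor_sq i p * tensor_sq i q * delta_pairings p q).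
  rewrite [RHS]exchange_big; apply: eq_bigr => p _; rewrite [RHS]exchange_big.
  by apply: eq_bigr => q _; rewrite big_distrl.
under eq_bigr => i _ do rewrite sum_delta_pairings_tensor -/(gram i i) gram_diag.
rewrite sumr_const card_ord sum_delta_pairings_sqr -mulr_natr; field.
by rewrite n_neq0 n2_neq0.
Qed.

Lemma sum_gram_sqr_row k : \sum_j gram k j ^+ 2 = s%:R / n%:R.
Proof.
have E : \sum_j 1 * (gram k j * gram j k) = s%:R / n%:R * gram k k.
  by apply: gram_weighted => a b; under eq_bigr do rewrite mul1r; exact: frame_tight.
rewrite gram_diag mulr1 in E; rewrite -E.
by apply: eq_bigr => j _; rewrite mul1r (gramC j k) expr2.
Qed.

Lemma sum_gram_sqr_conv i k :
  \sum_j gram i j ^+ 2 * gram j k ^+ 2 =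
  s%:R / (n%:R * (n%:R + 2)) * (1 + 2 * gram i k ^+ 2).
Proof.
under eq_bigr => j _ do rewrite (gramC j k).
rewrite (eq_bigr (fun j => 1 * ((\sum_p tensor_sq i p * tensor_sq j p) *
  (\sum_q tensor_sq k q * tensor_sq j q)))) => [|j _]; last first.
  by rewrite mul1r !sum_tensor_sq.
rewrite sum_weighted_proj.
under eq_bigr => p _ do under eq_bigr => q _ do
  (under eq_bigr => j _ do rewrite mul1r; rewrite frame4_tight mulrCA).
under eq_bigr => p _ do rewrite -mulr_sumr.
rewrite -mulr_sumr /tensor_sq sum_delta_pairings_tensor -!/(gram _ _) !gram_diag.
by rewrite mul1r.
Qed.

Variable w : 'I_s -> R.
Hypothesis w_kernel : forall a b, \sum_i w i * (v i a * v i b) = 0.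

Lemma sum_kernel : \sum_i w i = 0.
Proof.
transitivity (\sum_i w i * gram i i); first by under [RHS]eq_bigr do rewrite gram_diag mulr1.
under eq_bigr do rewrite mulr_sumr.
by rewrite exchange_big big1 // => a _; apply: w_kernel.
Qed.

Lemma sum_kernel_gram_sqr k : \sum_j w j * gram k j ^+ 2 = 0.
Proof.
have E : \sum_j w j * (gram k j * gram j k) = 0 * gram k k.
  by apply: gram_weighted => a b; rewrite w_kernel mul0r.
rewrite mul0r in E; apply: etrans E.
by apply: eq_bigr => j _; rewrite (gramC j k) expr2.
Qed.

Lemma sum_kernel_shift_gram rho k l :
  \sum_j (rho + w j) * (gram k j * gram j l) = rho * (s%:R / n%:R) * gram k l.
Proof.
apply: gram_weighted => a b.
under eq_bigr do rewrite mulrDl.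
by rewrite big_split /= w_kernel addr0 -mulr_sumr frame_tight mulrA.
Qed.

Hypothesis s_eq : s = ('C(n.+1, 2) + 1)%N.

Let W := \sum_j w j ^+ 2.
Let e : R := n%:R * (n%:R + 2) / (2 * s%:R).

Let s_val : s%:R = n%:R * (n%:R + 1) / 2 + 1 :> R.
Proof.
have bin2E : 'C(n.+1, 2)%:R = n%:R * (n%:R + 1) / 2 :> R.
  have := congr1 (GRing.natmul (1 : R)) (mul_bin_diag n.+1 1).
  rewrite /= bin1 !natrM [n.+1%:R]mulrSr => E.
  by rewrite -[_%:R](@mulKf _ 2) ?pnatr_eq0 // -E; field.
by rewrite s_eq natrD bin2E.
Qed.

Let s2_neq0 : n%:R * (n%:R + 1) + 2 != 0 :> R.
Proof. by rewrite -(natrD _ n 1) -natrM -(natrD _ _ 2) pnatr_eq0 addn2. Qed.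

Let s_gt0 : 0 < s%:R :> R. Proof. by rewrite ltr0n s_eq addn1. Qed.
Let s_neq0 : s%:R != 0 :> R. Proof. by rewrite gt_eqF. Qed.

(* [resid k] is [e_k] minus its orthogonal projection onto the span of the
   all-one vector, [w] and [(gram k j ^+ 2)_j]. *)
Definition resid k j :=
  δ k j - s%:R^-1 - (gram k j ^+ 2 - n%:R^-1) * e - w k * w j / W.

Lemma sum_mul_resid (H : 'I_s -> R) k :
  \sum_j H j * resid k j =
  H k - (\sum_j H j) / s%:R
  - ((\sum_j H j * gram k j ^+ 2) - (\sum_j H j) / n%:R) * e
  - w k / W * \sum_j H j * w j.
Proof.
transitivity (\sum_j (H j * δ k j - H j / s%:R
   - (H j * gram k j ^+ 2 - H j / n%:R) * e - w k / W * (H j * w j))).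
  by apply: eq_bigr => j _; rewrite /resid; ring.
by rewrite !sumrB sum_mul_delta -!mulr_suml -mulr_sumr sumrB -mulr_suml.
Qed.

Hypothesis w_neq0 : exists i, w i != 0.

Let W_neq0 : W != 0.
Proof.
have [i wi] := w_neq0; apply: contraNneq wi => /eqP.
by rewrite psumr_eq0 => [/allP/(_ i (mem_index_enum _))|j _]; rewrite ?sqrf_eq0 ?sqr_ge0.
Qed.

Lemma sum_resid k : \sum_j resid k j = 0.
Proof.
under eq_bigr do rewrite -[resid _ _]mul1r.
rewrite sum_mul_resid sumr_const card_ord.
under eq_bigr do rewrite mul1r.
rewrite sum_gram_sqr_row.
under eq_bigr do rewrite mul1r.
rewrite sum_kernel -mulr_natr mul1r; field.
by rewrite W_neq0 n_neq0 s_neq0.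
Qed.

Lemma sum_kernel_resid k : \sum_j w j * resid k j = 0.
Proof.
rewrite sum_mul_resid sum_kernel sum_kernel_gram_sqr.
under eq_bigr do rewrite -expr2.
by rewrite -/W; field; rewrite W_neq0 n_neq0 s_neq0.
Qed.

Lemma sum_gram_resid k : \sum_j gram k j ^+ 2 * resid k j = 0.
Proof.
have conv : \sum_j gram k j ^+ 2 * gram k j ^+ 2 =
    s%:R / (n%:R * (n%:R + 2)) * (1 + 2 * gram k k ^+ 2).
  by rewrite -sum_gram_sqr_conv; apply: eq_bigr => j _; rewrite (gramC j k).
have kern : \sum_j gram k j ^+ 2 * w j = 0.
  by apply: etrans (sum_kernel_gram_sqr k); apply: eq_bigr => j _; rewrite mulrC.
rewrite sum_mul_resid sum_gram_sqr_row conv kern gram_diag /e.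
by field; rewrite W_neq0 n_neq0 n2_neq0 s_neq0.
Qed.

Lemma sum_resid_sqr k : \sum_j resid k j ^+ 2 = resid k k.
Proof.
under eq_bigr do rewrite expr2.
rewrite sum_mul_resid sum_resid.
have gram_orth : \sum_j resid k j * gram k j ^+ 2 = 0.
  by apply: etrans (sum_gram_resid k); apply: eq_bigr => j _; rewrite mulrC.
have kern_orth : \sum_j resid k j * w j = 0.
  by apply: etrans (sum_kernel_resid k); apply: eq_bigr => j _; rewrite mulrC.
by rewrite gram_orth kern_orth; ring.
Qed.

Lemma sum_resid_diag : \sum_k resid k k = 0.
Proof.
transitivity (\sum_(k < s) (1 - s%:R^-1 - (1 - n%:R^-1) * e - W^-1 * w k ^+ 2)).
  by apply: eq_bigr => k _; rewrite /resid eqxx gram_diag /=; ring.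
rewrite !sumrB !sumr_const card_ord -mulr_sumr -/W mulVf //.
have es : e * s%:R = n%:R * (n%:R + 2) / 2 by rewrite /e; field.
rewrite -[s%:R^-1 *+ s]mulr_natr -[(1 - n%:R^-1) * e *+ s]mulr_natr.
by rewrite mulVf // -mulrA es s_val; field.
Qed.

Lemma resid_eq0 k j : resid k j = 0.
Proof.
move: k j; apply: sum2_sqr_eq0.
by apply: etrans sum_resid_diag; apply: eq_bigr => k _; rewrite sum_resid_sqr.
Qed.

Lemma kernel_sqr k : w k ^+ 2 = W / s%:R.
Proof.
have := resid_eq0 k k; rewrite /resid eqxx gram_diag expr1n /= => /eqP.
rewrite subr_eq0 => /eqP E.
rewrite (_ : w k ^+ 2 = W * (w k * w k / W)); last by field.
by rewrite -E /e s_val /=; field; rewrite s2_neq0 n_neq0.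
Qed.

Lemma gram_sqr_offdiag k j : k != j ->
  gram k j ^+ 2 = n%:R^-1 - 2 / (n%:R * (n%:R + 2)) * (1 + s%:R * (w k * w j) / W).
Proof.
move=> /negPf kj; have := resid_eq0 k j; rewrite /resid kj /= => E.
have e_neq0 : e != 0.
  by rewrite /e !mulf_eq0 invr_eq0 !mulf_eq0 !negb_or n_neq0 n2_neq0 s_neq0 pnatr_eq0.
rewrite (_ : gram k j ^+ 2 = n%:R^-1 - (s%:R^-1 + w k * w j / W) / e
  - (0%:R - s%:R^-1 - (gram k j ^+ 2 - n%:R^-1) * e - w k * w j / W) / e).
  by rewrite E mul0r subr0 /e; field; rewrite W_neq0 n_neq0 n2_neq0 s_neq0.
by field; rewrite e_neq0 W_neq0 n_neq0 s_neq0.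
Qed.

Lemma kernel_pm k i : w i = w k \/ w i = - w k.
Proof.
have : (w i == w k) || (w i == - w k) by rewrite -eqf_sqr !kernel_sqr.
by case/orP => /eqP; [left | right].
Qed.

Lemma exists_kernel_opp k : w k != 0 -> exists l, w l = - w k.
Proof.
move=> wk; case: (pickP (fun l => w l == - w k)) => [l /eqP | w_same]; first by exists l.
have : \sum_i w i = \sum_(i < s) w k.
  apply: eq_bigr => i _; case: (kernel_pm k i) => // wi.
  by move: (w_same i); rewrite wi eqxx.
rewrite sum_kernel sumr_const card_ord => /esym/eqP.
by rewrite -mulr_natl mulf_eq0 (negbTE s_neq0) (negbTE wk).
Qed.

Lemma gram_sqr_same k j : k != j -> w j = w k ->
  gram k j ^+ 2 = (n%:R - 2) / (n%:R * (n%:R + 2)).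
Proof.
move=> kj wj; rewrite gram_sqr_offdiag // wj -expr2 kernel_sqr.
by field; rewrite W_neq0 n_neq0 n2_neq0 s_neq0.
Qed.

Lemma gram_sqr_opp k j : w k != 0 -> w j = - w k -> gram k j ^+ 2 = n%:R^-1.
Proof.
move=> wk wj; have kj : k != j.
  by apply: contraNneq wk => kj; apply/eqP; move: wj; rewrite -kj; lra.
rewrite gram_sqr_offdiag // wj mulrN -expr2 kernel_sqr.
by field; rewrite W_neq0 n_neq0 n2_neq0 s_neq0.
Qed.

(* Weighting by [w k + w i] keeps the [i] with [w i = w k]; each such term
   [gram k i * gram i l / gram k l] is [1] for [i = k] and
   [+- sqrt ((n - 2) / (n (n + 2)))] otherwise. *)
Lemma kernel_integrality k l : w k != 0 -> w l = - w k ->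
  exists z : int, (s%:R / (2 * n%:R) - 1 : R) ^+ 2 =
                  z%:~R ^+ 2 * ((n%:R - 2) / (n%:R * (n%:R + 2))).
Proof.
move=> wk wl; have gkl := gram_sqr_opp wk wl.
have gkl_neq0 : gram k l != 0 by rewrite -sqrf_eq0 gkl invr_eq0 n_neq0.
pose a i := (w k + w i) * (gram k i * gram i l) / (2 * w k * gram k l).
have sum_a : \sum_i a i = s%:R / (2 * n%:R).
  rewrite -mulr_suml sum_kernel_shift_gram.
  by field; rewrite gkl_neq0 wk n_neq0.
have a_k : a k = 1 by rewrite /a gram_diag; field; rewrite gkl_neq0 wk.
have a_pm i : i != k -> a i = 0 \/ a i ^+ 2 = (n%:R - 2) / (n%:R * (n%:R + 2)).
  move=> ik; case: (kernel_pm k i) => wi; last by left; rewrite /a wi subrr !mul0r.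
  have gil : gram i l ^+ 2 = n%:R^-1 by rewrite gram_sqr_opp ?wi // wl.
  right; rewrite /a wi -(gram_sqr_same _ wi) 1?eq_sym //.
  rewrite (_ : _ ^+ 2 = gram k i ^+ 2 * gram i l ^+ 2 / gram k l ^+ 2).
    by rewrite gil gkl; field; rewrite n_neq0.
  by field; rewrite gkl_neq0 wk.
have [z hz] := sum_sqr_pm a_pm.
by exists z; rewrite -hz -sum_a (bigD1 k) //= a_k addrAC subrr add0r.
Qed.

Lemma tight_frame_kernel_absurd : (3 <= n)%N -> False.
Proof.
move=> n_ge3; have [k wk] := w_neq0; have [l wl] := exists_kernel_opp wk.
have [z hz] := kernel_integrality wk wl.
have nm2_neq0 : n%:R - 2 != 0 :> R by rewrite subr_eq0 eqr_nat gtn_eqF.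
have E : 16 * n%:R * z%:~R ^+ 2 = (n%:R - 1) ^+ 2 * (n%:R - 2) * (n%:R + 2) :> R.
  rewrite (_ : z%:~R ^+ 2 = z%:~R ^+ 2 * ((n%:R - 2) / (n%:R * (n%:R + 2)))
                           * (n%:R * (n%:R + 2) / (n%:R - 2))); last first.
    by field; rewrite nm2_neq0 n_neq0 n2_neq0.
  by rewrite -hz s_val; field; rewrite nm2_neq0 n_neq0.
move: (no_int_solution z n_ge3); rewrite -(eqr_int R) => /eqP; apply.
rewrite !expr2 !intrM [(_ - 1)%:~R]intrB [(_ - 2)%:~R]intrB [(_ + 2)%:~R]intrD.
by move: E; rewrite !expr2.
Qed.

End TightFrame.

Lemma card_lower_pairs n :
  #|[set p : 'I_n * 'I_n | (p.2 <= p.1)%N]| = 'C(n.+1, 2).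
Proof.
transitivity (\sum_(a < n) \sum_(b < n | (b <= a)%N) 1)%N.
  by rewrite pair_big_dep -sum1_card; apply: eq_bigl => p; rewrite inE.
rewrite (eq_bigr (fun a : 'I_n => a.+1)) => [|a _]; last first.
  rewrite (eq_bigl (fun b : 'I_n => true && (b < a.+1)%N)) //.
  by rewrite (big_ord_narrow_cond (ltn_ord a)) sum1_card card_ord.
by rewrite -bin2_sum big_nat_recl // big_mkord.
Qed.

Lemma exists_sym_kernel (R : fieldType) n s (v : 'I_s -> 'I_n -> R) :
  ('C(n.+1, 2) < s)%N ->
  exists2 w : 'I_s -> R, (exists i, w i != 0) &
    forall a b, \sum_i w i * (v i a * v i b) = 0.
Proof.
move=> s_gt; set S := [set p : 'I_n * 'I_n | (p.2 <= p.1)%N].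
pose A := \matrix_(i < s, k < #|S|) (v i (enum_val k).1 * v i (enum_val k).2).
have /rowV0Pn[u /sub_kermxP uA u_neq0] : kermx A != 0.
  rewrite kermx_eq0 /row_free neq_ltn (leq_ltn_trans (rank_leq_col A)) //.
  by rewrite card_lower_pairs.
exists (u 0).
  case: (pickP (fun i => u 0 i != 0)) => [i ui | u0]; first by exists i.
  by case/eqP: u_neq0; apply/rowP => i; rewrite mxE; apply/eqP/negbFE/u0.
have uA_col (k : 'I_#|S|) : \sum_i u 0 i * (v i (enum_val k).1 * v i (enum_val k).2) = 0.
  have /rowP/(_ k) := uA; rewrite !mxE => uAk.
  by apply: etrans uAk; apply: eq_bigr => i _; rewrite mxE.
suff lower (a b : 'I_n) : (b <= a)%N -> \sum_i u 0 i * (v i a * v i b) = 0.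
  move=> a b; case: (leqP b a) => [/lower // | /ltnW/lower ab0].
  by apply: etrans ab0; apply: eq_bigr => i _; rewrite [v i a * _]mulrC.
move=> ba; have Sab : (a, b) \in S by rewrite inE.
by have := uA_col (enum_rank_in Sab (a, b)); rewrite enum_rankK_in.
Qed.

Section Moments.
Variables (R : realType) (n s : nat) (t : 'I_s -> 'I_s -> R).
Hypothesis n_gt1 : (1 < n)%N.

Let n_ge2 : 2 <= n%:R :> R. Proof. by rewrite ler_nat. Qed.

Lemma gegen2E (x : R) : gegen n 2 x = (n%:R * x ^+ 2 - 1) / (n%:R - 1).
Proof. by rewrite /gegen /=; field; rewrite !gt_eqF //; have := n_ge2; lra. Qed.

Lemma gegen4E (x : R) :
  gegen n 4 x = ((n%:R + 2) * (n%:R + 4) * x ^+ 4 - 6 * (n%:R + 2) * x ^+ 2 + 3)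
                / ((n%:R - 1) * (n%:R + 1)).
Proof. by rewrite /gegen /=; field; rewrite !gt_eqF //; have := n_ge2; lra. Qed.

Let sum2_scaleD (F G : 'I_s -> 'I_s -> R) a :
  \sum_i \sum_j (a * F i j + G i j) = a * \sum_i \sum_j F i j + \sum_i \sum_j G i j.
Proof.
rewrite mulr_sumr -big_split; apply: eq_bigr => i _.
by rewrite mulr_sumr -big_split.
Qed.

Let sum2_const (c : R) : \sum_(i < s) \sum_(j < s) c = c * s%:R ^+ 2.
Proof. by rewrite !sumr_const card_ord -mulrnA -natrX mulr_natr mulnn. Qed.

Lemma gegen_moment2 : \sum_i \sum_j gegen n 2 (t i j) = 0 ->
  \sum_i \sum_j t i j ^+ 2 = s%:R ^+ 2 / n%:R.
Proof.
have g2 (x : R) : gegen n 2 x = n%:R / (n%:R - 1) * x ^+ 2 + - (n%:R - 1)^-1.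
  by rewrite gegen2E; field; rewrite gt_eqF //; have := n_ge2; lra.
under eq_bigr do under eq_bigr do rewrite g2.
rewrite sum2_scaleD sum2_const.
move/(congr1 (fun y => s%:R ^+ 2 / n%:R + (n%:R - 1) / n%:R * y)).
rewrite mulr0 addr0 => <-.
by field; rewrite !gt_eqF //; have := n_ge2; lra.
Qed.

Lemma gegen_moment4 : \sum_i \sum_j gegen n 2 (t i j) = 0 ->
  \sum_i \sum_j gegen n 4 (t i j) = 0 ->
  \sum_i \sum_j t i j ^+ 4 = 3 * s%:R ^+ 2 / (n%:R * (n%:R + 2)).
Proof.
move=> /gegen_moment2 m2.
have g4 (x : R) : gegen n 4 x = (n%:R + 2) * (n%:R + 4) / ((n%:R - 1) * (n%:R + 1)) * x ^+ 4
    + (- (6 * (n%:R + 2)) / ((n%:R - 1) * (n%:R + 1)) * x ^+ 2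
       + 3 / ((n%:R - 1) * (n%:R + 1))).
  by rewrite gegen4E; field; rewrite !gt_eqF //; have := n_ge2; lra.
under eq_bigr do under eq_bigr do rewrite g4.
rewrite sum2_scaleD sum2_scaleD sum2_const m2.
move/(congr1 (fun y => 3 * s%:R ^+ 2 / (n%:R * (n%:R + 2))
  + (n%:R - 1) * (n%:R + 1) / ((n%:R + 2) * (n%:R + 4)) * y)).
rewrite mulr0 addr0 => <-.
by field; rewrite !gt_eqF //; have := n_ge2; lra.
Qed.
End Moments.

Lemma sum_seq2_nth (R : nmodType) (T : Type) (x0 : T) (C : seq T) (F : T -> T -> R) :
  \sum_(x <- C) \sum_(y <- C) F x y =
  \sum_(i < size C) \sum_(j < size C) F (nth x0 C i) (nth x0 C j).
Proof.
rewrite (big_nth x0) big_mkord; apply: eq_bigr => i _.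
by rewrite (big_nth x0) big_mkord.
Qed.

Theorem mainTheorem6 (R : realType) (n : nat) :
  (3 <= n)%N ->
  ~ exists C : seq 'rV[R]_n,
      spherical22design C /\ size C = ('C(n.+1, 2) + 1)%N.
Proof.
move=> n_ge3 [C [[_ _ C_unit P2_sum P4_sum] sizeC]].
pose v (i : 'I_(size C)) (a : 'I_n) := nth 0 C i 0 a.
rewrite !(sum_seq2_nth 0) in P2_sum P4_sum.
have n_gt1 : (1 < n)%N by apply: ltnW.
have [|w w_neq0 w_kernel] := exists_sym_kernel v; first by rewrite sizeC addn1.
apply: (tight_frame_kernel_absurd (ltnW n_gt1) _ (gegen_moment2 n_gt1 P2_sum)
  (gegen_moment4 n_gt1 P2_sum P4_sum) w_kernel sizeC w_neq0 n_ge3).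
by move=> i; apply: C_unit; apply: mem_nth.
Qed.
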